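(* Let $k,d$ be positive integers, let $D$ be a totally coloured digraph and let $A\subseteq V(D)$ be a $(3kd,d)$-connected subset of $D$. Let $S$ be a set of colours with $|S|\leq k$ and let $a_1,\dots,a_k\in A$ be vertices such that no $a_i$ has a colour in $S$ and $a_1,\dots,a_k$ have pairwise different colours. Then there is a rainbow path $P$ in $D$ from $a_1$ to $a_k$ of length at most $kd$ which passes through each of $a_1,\dots,a_k$ and has no vertex or edge with a colour in $S$.
   Context: Digraphs are finite, without loops and without multiple edges (an edge may appear in both directions). A path is a sequence of distinct vertices $x_1,\dots,x_t$ such that each $x_ix_{i+1}$ is a directed edge; its length is its number of edges. A total colouring assigns a colour to every vertex and every edge. A path (or subgraph) is rainbow if all its vertices and edges have pairwise different colours. For a totally coloured digraph $D$, a set $A\subseteq V(D)$ is $(k,d)$-connected in $D$ if for every set $S$ of at most $k-1$ colours and all vertices $x,y\in A$, there is a rainbow path from $x$ to $y$ of length at most $d$ that internally avoids $S$, i.e. none of its edges and none of its vertices other than $x$ and $y$ has a colour in $S$. *)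

From mathcomp Require Import all_boot.
Set Implicit Arguments. Unset Strict Implicit. Unset Printing Implicit Defensive.

(* A digraph: finite vertex type V, edge relation e (loopless: irreflexive e,
   no multiple edges by construction; both directions allowed).
   A total colouring: cv colours vertices, ce u v colours the edge uv
   (only relevant when e u v). *)

Section Rainbow.
Variables (V : finType) (C : eqType) (e : rel V) (cv : V -> C) (ce : V -> V -> C).

Definition is_path (P : seq V) (x y : V) : bool :=
  if P is z :: rest then
    [&& z == x, path e z rest, last z rest == y & uniq P]
  else false.

Definition plength (P : seq V) : nat := (size P).-1.

Definition edge_cols (P : seq V) : seq C :=
  [seq ce u.1 u.2 | u <- zip P (behead P)].

Definition rainbow (P : seq V) : bool :=
  uniq (map cv P ++ edge_cols P).

Definition internally_avoids (S : seq C) (P : seq V) (x y : V) : bool :=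
  all (fun c => c \notin S) (edge_cols P) &&
  all (fun v => [|| v == x, v == y | cv v \notin S]) P.

Definition kd_connected (k d : nat) (A : {set V}) : Prop :=
  forall (S : seq C), size S <= k.-1 ->
  forall x y, x \in A -> y \in A ->
  exists P : seq V, [&& is_path P x y, rainbow P, plength P <= d
                      & internally_avoids S P x y].

End Rainbow.

From mathcomp Require Import all_boot zify.

Set Implicit Arguments.
Unset Strict Implicit.
Unset Printing Implicit Defensive.

(* Greedy construction: extend a rainbow path from a_1 segment by segment.
   To reach the next target a_i, apply connectivity with the forbidden set
   consisting of S, every colour already used on the path, and the colours of
   the targets still to be visited; the new segment then keeps the path
   rainbow, avoids S, and leaves the colours of later targets free.  Since the
   path has at most (k-1)d edges and k targets, the forbidden set always has
   fewer than 3kd colours. *)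

Section Colours.
Variables (V : finType) (C : eqType) (e : rel V) (cv : V -> C) (ce : V -> V -> C).

Definition colours (P : seq V) : seq C := map cv P ++ edge_cols ce P.

Lemma size_edge_cols x Q : size (edge_cols ce (x :: Q)) = size Q.
Proof. by rewrite /edge_cols size_map size_zip /=; apply/minn_idPr. Qed.

Lemma size_colours x Q : size (colours (x :: Q)) = (size Q).*2.+1.
Proof. by rewrite /colours size_cat size_map size_edge_cols addSn addnn. Qed.

Lemma edge_cols_cat x Q Q' :
  edge_cols ce (x :: Q ++ Q') = edge_cols ce (x :: Q) ++ edge_cols ce (last x Q :: Q').
Proof. by elim: Q x => [|y Q IH] x //=; move: (IH y); rewrite /edge_cols /= => ->. Qed.

(* The head colour of [colours (last x Q :: Q')] is that of the shared vertex. *)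
Lemma perm_colours_cat x Q Q' :
  perm_eq (colours (x :: Q ++ Q'))
          (colours (x :: Q) ++ behead (colours (last x Q :: Q'))).
Proof.
rewrite /colours edge_cols_cat -cat_cons map_cat -!catA perm_cat2l /=.
by rewrite perm_catCA.
Qed.

Lemma rainbow_uniq P : rainbow cv ce P -> uniq P.
Proof. by rewrite /rainbow cat_uniq => /and3P [/map_uniq]. Qed.

Lemma rainbow_uniq_behead y Q' : rainbow cv ce (y :: Q') -> uniq (behead (colours (y :: Q'))).
Proof. by case/andP. Qed.

Lemma internally_avoids_new_colours F y a Q' :
  is_path e (y :: Q') y a -> internally_avoids cv ce F (y :: Q') y a ->
  {in behead (colours (y :: Q')), forall c, (c == cv a) || (c \notin F)}.
Proof.
case/and4P => _ _ _ /andP [yQ' _] /andP [/allP avoidE /allP avoidV] c.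
rewrite mem_cat => /orP [/mapP [v vQ' ->] | /avoidE -> //]; last exact: orbT.
have /or3P [/eqP vy | /eqP -> | ->] := avoidV v (@mem_behead _ (y :: Q') v vQ').
- by rewrite -vy vQ' in yQ'.
- by rewrite eqxx.
- exact: orbT.
Qed.

Lemma colours_extend S T x Q Q' a :
  is_path e (last x Q :: Q') (last x Q) a -> rainbow cv ce (last x Q :: Q') ->
  internally_avoids cv ce (S ++ colours (x :: Q) ++ cv a :: T) (last x Q :: Q') (last x Q) a ->
  uniq (colours (x :: Q) ++ cv a :: T) ->
  all (fun c => c \notin S) (colours (x :: Q) ++ cv a :: T) ->
  uniq (colours (x :: Q ++ Q') ++ T) /\ all (fun c => c \notin S) (colours (x :: Q ++ Q') ++ T).
Proof.
set F := S ++ _ => pathR rainbowR avoidR uniqQ avoidQ.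
have fresh := internally_avoids_new_colours pathR avoidR.
have [a_new uniq_old] : cv a \notin colours (x :: Q) ++ T /\ uniq (colours (x :: Q) ++ T).
  by apply/andP; rewrite -cons_uniq -cat1s uniq_catCA.
have [aS avoid_old] : cv a \notin S /\ all (fun c => c \notin S) (colours (x :: Q) ++ T).
  by apply/andP; move: avoidQ; rewrite !(all_cat _ (colours _)) /= andbCA.
have old_F c : c \in colours (x :: Q) ++ T -> c \in F.
  rewrite /F (mem_cat c S) !(mem_cat c (colours _)) (in_cons (cv a)).
  by case/orP=> ->; rewrite !orbT.
have perm_new : perm_eq (colours (x :: Q ++ Q') ++ T)
              ((colours (x :: Q) ++ T) ++ behead (colours (last x Q :: Q'))).
  by rewrite perm_sym perm_catAC perm_cat2r perm_sym perm_colours_cat.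
rewrite (perm_uniq perm_new) (perm_all _ perm_new) cat_uniq all_cat uniq_old avoid_old.
rewrite (rainbow_uniq_behead rainbowR) andbT /=; split.
- apply/hasPn => c /fresh /orP [/eqP -> // | cF]; exact: contra (old_F c) cF.
- apply/allP => c /fresh /orP [/eqP -> // | cF].
  by apply: contra cF; rewrite /F mem_cat => ->.
Qed.

Variables (k d : nat) (A : {set V}) (S : seq C) (a1 : V).
Hypotheses (hd : 0 < d) (hS : size S <= k)
  (hA : kd_connected e cv ce (3 * k * d) d A).

Lemma extend_rainbow_path rest Q :
  path e a1 Q -> last a1 Q \in A -> {subset rest <= A} ->
  uniq (colours (a1 :: Q) ++ map cv rest) ->
  all (fun c => c \notin S) (colours (a1 :: Q) ++ map cv rest) ->
  size rest < k -> size Q + d * size rest <= d * (k - 1) ->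
  exists2 X, path e a1 (Q ++ X) /\ last a1 (Q ++ X) = last (last a1 Q) rest &
    [/\ rainbow cv ce (a1 :: Q ++ X), all (fun c => c \notin S) (colours (a1 :: Q ++ X)),
         {subset rest <= a1 :: Q ++ X} & size X <= d * size rest].
Proof.
elim: rest Q => [|a rest IH] Q pathQ lastQ_A restA uniqQ avoidQ small budget.
  by exists [::]; move: uniqQ avoidQ; rewrite /= !cats0.
set F := S ++ colours (a1 :: Q) ++ map cv (a :: rest).
have sizeF : size F <= (3 * k * d).-1.
  move: small budget; rewrite /F 2!size_cat size_colours size_map /=; nia.
have [R /and4P [pathR rainbowR lenR avoidR]] := hA sizeF lastQ_A (restA a (mem_head _ _)).
case: R pathR rainbowR lenR avoidR => [//|z Q'] pathR rainbowR lenR avoidR.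
case/and4P: (pathR) => /eqP zy pathQ' /eqP lastQ' _; subst z.
have [uniq_new avoid_new] := colours_extend pathR rainbowR avoidR uniqQ avoidQ.
have pathQQ' : path e a1 (Q ++ Q') by rewrite cat_path pathQ.
have lastQQ' : last a1 (Q ++ Q') = a by rewrite last_cat lastQ'.
have lastQQ'_A : last a1 (Q ++ Q') \in A by rewrite lastQQ' restA ?mem_head.
have restA' : {subset rest <= A} by move=> v vrest; apply: restA; rewrite inE vrest orbT.
have budget' : size (Q ++ Q') + d * size rest <= d * (k - 1).
  apply: leq_trans budget; rewrite size_cat -addnA leq_add2l /= mulnS leq_add2r.
  exact: lenR.
have [X [pathX lastX] [rainbowX avoidX coverX sizeX]] :=
  IH (Q ++ Q') pathQQ' lastQQ'_A restA' uniq_new avoid_new (ltnW small) budget'.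
rewrite -catA in pathX lastX rainbowX avoidX coverX.
exists (Q' ++ X); first by split; rewrite // lastX lastQQ'.
split=> //.
- by move=> v; rewrite inE => /orP [/eqP -> | /coverX //]; rewrite -lastQQ' catA
    -cat_cons mem_cat mem_last.
- by rewrite size_cat /= mulnS leq_add.
Qed.

End Colours.

Theorem mainTheorem4 (V : finType) (C : eqType) (e : rel V)
  (cv : V -> C) (ce : V -> V -> C) (loopless : irreflexive e)
  (k d : nat) (hk : 0 < k) (hd : 0 < d) (A : {set V})
  (hA : kd_connected e cv ce (3 * k * d) d A)
  (S : seq C) (hS : size S <= k)
  (a1 : V) (arest : seq V) (hsize : size (a1 :: arest) = k)
  (hinA : all (fun v => v \in A) (a1 :: arest))
  (hnotS : all (fun v => cv v \notin S) (a1 :: arest))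
  (hdist : uniq (map cv (a1 :: arest))) :
  exists P : seq V,
    [&& is_path e P a1 (last a1 arest), rainbow cv ce P, plength P <= k * d,
        all (fun v => v \in P) (a1 :: arest),
        all (fun v => cv v \notin S) P
      & all (fun c => c \notin S) (edge_cols ce P)].
Proof.
case/andP: hinA => a1A arestA.
have avoid_targets : all (fun c => c \notin S) (map cv (a1 :: arest)) by rewrite all_map.
have few_targets : size arest < k by rewrite -hsize.
have budget : size ([::] : seq V) + d * size arest <= d * (k - 1) by rewrite -hsize subn1.
have [X [pathX lastX] [rainbowX avoidX coverX sizeX]] :=
  extend_rainbow_path hd hS hA (Q := [::]) isT a1A (allP arestA) hdist avoid_targets
    few_targets budget.
exists (a1 :: X); rewrite /is_path eqxx pathX lastX (rainbow_uniq rainbowX) rainbowX.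
move: avoidX; rewrite all_cat all_map => /andP [-> ->].
rewrite eqxx /= mem_head !andbT; apply/andP; split; last exact/allP.
by apply: leq_trans sizeX _; rewrite [k * d]mulnC leq_mul2l ltnW ?orbT.
Qed.
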